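(* Let $\alpha:U\to V$ be a surjective h-transmission between commutative supertropical monoids, with $M:=eU$, $N:=eV$, $\gamma:=\alpha^\nu$, and let $\alpha=\rho\circ\mu\circ\beta\circ\lambda$ be its canonical factorization, where $\lambda=\pi_{E(U,\mathfrak A)}:U\to\bar U:=U/E(U,\mathfrak A)$ with $\mathfrak A=\mathfrak A_\alpha$, $\beta=\pi_{F(\bar U,\gamma)}:\bar U\to W:=\bar U/F(\bar U,\gamma)$, $\mu=\pi_T:W\to\bar W:=W/T$ with $T$ a tangible MFCE-relation on $W$, and $\rho:\bar W\to V$ an isomorphism over $N$. (i) The factors $\lambda,\beta,\mu,\rho$ are h-transmissions. (ii) If $U$ is a semiring, then $\bar U,W,\bar W,V$ are semirings, and $\lambda,\beta,\mu,\rho$ are semiring homomorphisms.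
   Context: All monoids are commutative. A supertropical monoid is a monoid $(U,\cdot)$ with absorbing element $0$ and distinguished idempotent $e$ with $ex=0\Rightarrow x=0$, together with a total ordering on $M:=eU$, compatible with multiplication and with $0$ least, making $M$ a bipotent semiring (addition $=\max$). $\mathcal T(U):=U\setminus eU$. Define $x+y:=y$ if $ex<ey$, $x$ if $ex>ey$, $ex$ if $ex=ey$; $U$ is a semiring if this addition is associative and distributive. A transmission $\alpha:U\to V$ is a map with $\alpha(0)=0$, $\alpha(1)=1$, multiplicative, $\alpha(e_U)=e_V$, order-preserving on $eU$; $\alpha^\nu$ is its restriction $eU\to eV$; ghost kernel $\mathfrak A_\alpha:=\{x:\alpha(x)\in eV\}$. An h-transmission is a transmission such that $ex<ey$ and $\alpha(ex)=\alpha(ey)$ imply $\alpha(y)\in eV$. For a TE-relation $E$ (multiplicative, order compatible on $M$, $ex\sim_E0\Rightarrow x\sim_E0$), $U/E$ has the unique supertropical monoid structure making $\pi_E$ a transmission. $E(U,\mathfrak A)$ for an ideal $\mathfrak A\supseteq M$: $x\sim y$ iff $x=y$ or ($x,y\in\mathfrak A$, $ex=ey$); ghost ideal of the quotient identified with $M$. $F(U,\gamma)$ for surjective $\gamma:M\to N$: $x\sim y$ iff $x=y$, or $x,y\in M$ with $\gamma(x)=\gamma(y)$, or $\gamma(ex)=\gamma(ey)=0$; ghost ideal of the quotient identified with $N$. An MFCE-relation is a multiplicative equivalence relation with $x\sim y\Rightarrow ex=ey$; it is tangible if each ghost element is equivalent only to itself. An isomorphism over $N$ is one whose ghost part is $\mathrm{id}_N$.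 (By the paper, every surjective transmission has a unique such canonical factorization.) *)

From Stdlib Require Import Bool.

Set Implicit Arguments.
Unset Strict Implicit.

(* A commutative supertropical monoid.  [le] is the total ordering of the
   ghost ideal M = eU (only its values on ghost elements matter). *)
Record stmonoid := STMonoid {
  carrier :> Type;
  smul : carrier -> carrier -> carrier;
  sone : carrier;
  szero : carrier;
  se : carrier;
  sle : carrier -> carrier -> bool;
  smulA : forall x y z, smul x (smul y z) = smul (smul x y) z;
  smulC : forall x y, smul x y = smul y x;
  smul1 : forall x, smul sone x = x;
  smul0 : forall x, smul szero x = szero;
  se_idem : smul se se = se;
  se_faithful : forall x, smul se x = szero -> x = szero;
  sle_refl : forall x, smul se x = x -> sle x x = true;
  sle_antisym : forall x y, smul se x = x -> smul se y = y ->
      sle x y = true -> sle y x = true -> x = y;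
  sle_trans : forall x y z, smul se x = x -> smul se y = y -> smul se z = z ->
      sle x y = true -> sle y z = true -> sle x z = true;
  sle_total : forall x y, smul se x = x -> smul se y = y ->
      sle x y = true \/ sle y x = true;
  sle_mul : forall x y z, smul se x = x -> smul se y = y -> smul se z = z ->
      sle x y = true -> sle (smul x z) (smul y z) = true;
  sle_zero : forall x, smul se x = x -> sle szero x = true
}.

Arguments smul {s}.
Arguments sone {s}.
Arguments szero {s}.
Arguments se {s}.
Arguments sle {s}.

Definition ghost (U : stmonoid) (x : U) : Prop := smul se x = x.

Definition slt (U : stmonoid) (x y : U) : bool := sle x y && negb (sle y x).

Definition sadd (U : stmonoid) (x y : U) : U :=
  if slt (smul se x) (smul se y) then y
  else if slt (smul se y) (smul se x) then x
  else smul se x.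

Definition is_semiring (U : stmonoid) : Prop :=
  (forall x y z : U, sadd x (sadd y z) = sadd (sadd x y) z) /\
  (forall x y z : U, smul (sadd x y) z = sadd (smul x z) (smul y z)).

Definition semiring_hom (U V : stmonoid) (f : U -> V) : Prop :=
  f szero = szero /\ f sone = sone /\
  (forall x y, f (smul x y) = smul (f x) (f y)) /\
  (forall x y, f (sadd x y) = sadd (f x) (f y)).

Definition surjective (A B : Type) (f : A -> B) : Prop :=
  forall b, exists a, f a = b.

Definition transmission (U V : stmonoid) (a : U -> V) : Prop :=
  a szero = szero /\ a sone = sone /\
  (forall x y, a (smul x y) = smul (a x) (a y)) /\
  a se = se /\
  (forall x y, ghost x -> ghost y -> sle x y = true -> sle (a x) (a y) = true).

Definition ghost_kernel (U V : stmonoid) (a : U -> V) (x : U) : Prop :=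
  ghost (a x).

Definition h_transmission (U V : stmonoid) (a : U -> V) : Prop :=
  transmission a /\
  (forall x y : U, slt (smul se x) (smul se y) = true ->
      a (smul se x) = a (smul se y) -> ghost (a y)).

Definition st_iso (U V : stmonoid) (r : U -> V) : Prop :=
  transmission r /\
  exists s : V -> U, transmission s /\
    (forall x, s (r x) = x) /\ (forall y, r (s y) = y).

(* q : U -> Q "is the quotient map pi_R : U -> U/R": a surjective transmission
   whose fibres are exactly the R-classes.  (U/R is the unique supertropical
   monoid structure making pi_R a transmission, so this determines (Q,q) up to
   unique isomorphism.) *)
Definition quotient_map (U Q : stmonoid) (R : U -> U -> Prop) (q : U -> Q) : Prop :=
  transmission q /\ surjective q /\ (forall x y, q x = q y <-> R x y).

Definition E_rel (U : stmonoid) (A : U -> Prop) (x y : U) : Prop :=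
  x = y \/ (A x /\ A y /\ smul se x = smul se y).

(* the relation F(U, g), g : M -> N given on the ghost elements of U *)
Definition F_rel (U V : stmonoid) (g : U -> V) (x y : U) : Prop :=
  x = y \/
  (ghost x /\ ghost y /\ g x = g y) \/
  (g (smul se x) = szero /\ g (smul se y) = szero).

Definition MFCE (U : stmonoid) (T : U -> U -> Prop) : Prop :=
  (forall x, T x x) /\ (forall x y, T x y -> T y x) /\
  (forall x y z, T x y -> T y z -> T x z) /\
  (forall x y z, T x y -> T (smul x z) (smul y z)) /\
  (forall x y, T x y -> smul se x = smul se y).

Definition tangible_MFCE (U : stmonoid) (T : U -> U -> Prop) : Prop :=
  MFCE T /\ (forall x y, ghost x -> T x y -> y = x).

(* An h-transmission preserves the supertropical addition: the only way it
   could fail is by collapsing [ex < ey] to [a(ex) = a(ey)], and then [a y] is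
   ghost, so the sum is still [a y].  Hence h-transmissions are semiring
   homomorphisms, and surjective ones carry associativity and distributivity
   over to their target.  The factors [lam], [mu] and [rho] are injective on
   ghost elements, so for them the h-condition is vacuous.  For [beta], a
   collision [beta (lam (ex)) = beta (lam (ey))] with [ex < ey] forces
   [alpha (ex) = alpha (ey)]; the h-property of [alpha] makes [alpha y] ghost,
   i.e. [y] lies in the ghost kernel, so [lam y = lam (ey)] is already ghost. *)
From Stdlib Require Import Bool.

Section Order.

Context {U : stmonoid}.
Implicit Types x y : U.

Lemma ghost_e x : ghost (smul se x).
Proof. unfold ghost; rewrite smulA, se_idem; reflexivity. Qed.

Lemma slt_irrefl x : slt x x = false.
Proof. unfold slt; destruct (sle x x); reflexivity. Qed.

Lemma slt_sle {x y} : slt x y = true -> sle x y = true.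
Proof. unfold slt; destruct (sle x y); simpl; congruence. Qed.

Lemma sle_slt_false {x y} : sle x y = true -> slt y x = false.
Proof. unfold slt; intros ->; apply andb_false_r. Qed.

Lemma slt_false_sle {x y} : ghost x -> ghost y -> slt x y = false -> sle y x = true.
Proof.
  unfold slt; intros gx gy.
  destruct (sle x y) eqn:Hxy, (sle y x) eqn:Hyx; simpl; try congruence.
  destruct (sle_total gx gy); congruence.
Qed.

Lemma ghost_trichotomy {x y} : ghost x -> ghost y ->
  slt x y = true \/ x = y \/ slt y x = true.
Proof.
  intros gx gy.
  destruct (slt x y) eqn:Hxy; [now left|].
  destruct (slt y x) eqn:Hyx; [now right; right|].
  right; left; apply sle_antisym; auto; apply slt_false_sle; auto.
Qed.

Lemma sadd_lt {x y} : slt (smul se x) (smul se y) = true -> sadd x y = y.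
Proof. unfold sadd; intros ->; reflexivity. Qed.

Lemma sadd_eq {x y} : smul se x = smul se y -> sadd x y = smul se x.
Proof. unfold sadd; intros <-; rewrite slt_irrefl; reflexivity. Qed.

Lemma saddC x y : sadd x y = sadd y x.
Proof.
  destruct (ghost_trichotomy (ghost_e x) (ghost_e y)) as [Hlt | [Heq | Hgt]].
  - rewrite sadd_lt by exact Hlt; unfold sadd.
    rewrite (sle_slt_false (slt_sle Hlt)), Hlt; reflexivity.
  - rewrite !sadd_eq; auto.
  - rewrite (sadd_lt Hgt); unfold sadd.
    rewrite (sle_slt_false (slt_sle Hgt)), Hgt; reflexivity.
Qed.

End Order.

Section Transmission.

Context {U V : stmonoid} {a : U -> V}.
Hypothesis Ha : transmission a.

Lemma transmission_e x : a (smul se x) = smul se (a x).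
Proof. destruct Ha as (_ & _ & amul & ae & _); rewrite amul, ae; reflexivity. Qed.

Lemma transmission_ghost {x} : ghost x -> ghost (a x).
Proof. unfold ghost; intros gx; rewrite <- transmission_e, gx; reflexivity. Qed.

Lemma transmission_sle x y : ghost x -> ghost y ->
  sle x y = true -> sle (a x) (a y) = true.
Proof. destruct Ha as (_ & _ & _ & _ & amono); exact (amono x y). Qed.

Lemma transmission_slt_reflect {x y} : ghost x -> ghost y ->
  slt (a x) (a y) = true -> slt x y = true.
Proof.
  intros gx gy Hlt; destruct (slt x y) eqn:Hxy; [reflexivity|].
  apply slt_false_sle, transmission_sle, sle_slt_false in Hxy; auto.
  congruence.
Qed.

Lemma h_transmission_of_ghost_inj :
  (forall x y, ghost x -> ghost y -> a x = a y -> x = y) -> h_transmission a.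
Proof.
  intros inj; split; [exact Ha|]; intros x y Hlt Heq.
  rewrite (inj _ _ (ghost_e x) (ghost_e y) Heq), slt_irrefl in Hlt; discriminate.
Qed.

End Transmission.

Section HTransmission.

Context {U V : stmonoid} {a : U -> V}.
Hypothesis Ha : h_transmission a.

Let Ht : transmission a := proj1 Ha.

Lemma h_transmission_sadd_lt {x y} : slt (smul se x) (smul se y) = true ->
  a (sadd x y) = sadd (a x) (a y).
Proof.
  intros Hlt; rewrite (sadd_lt Hlt).
  assert (Hle : sle (smul se (a x)) (smul se (a y)) = true).
  { rewrite <- !(transmission_e Ht).
    apply transmission_sle, slt_sle; auto using ghost_e. }
  destruct (ghost_trichotomy (ghost_e (a x)) (ghost_e (a y))) as [Alt | [Aeq | Agt]].
  - rewrite sadd_lt; auto.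
  - assert (gy : ghost (a y)).
    { apply (proj2 Ha x y Hlt); rewrite !(transmission_e Ht); exact Aeq. }
    rewrite sadd_eq, Aeq by exact Aeq; exact (eq_sym gy).
  - rewrite (sle_slt_false Hle) in Agt; discriminate.
Qed.

Lemma h_transmission_sadd x y : a (sadd x y) = sadd (a x) (a y).
Proof.
  destruct (ghost_trichotomy (ghost_e x) (ghost_e y)) as [Hlt | [Heq | Hgt]].
  - exact (h_transmission_sadd_lt Hlt).
  - rewrite !sadd_eq, (transmission_e Ht); auto.
    rewrite <- !(transmission_e Ht), Heq; reflexivity.
  - rewrite saddC, (saddC (a x)); exact (h_transmission_sadd_lt Hgt).
Qed.

Lemma semiring_hom_of_h_transmission : semiring_hom a.
Proof.
  destruct Ht as (a0 & a1 & amul & _ & _).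
  repeat split; auto using h_transmission_sadd.
Qed.

Lemma semiring_of_h_transmission :
  surjective a -> is_semiring U -> is_semiring V.
Proof.
  intros Hs [saddA sadd_mulDl]; destruct Ht as (_ & _ & amul & _ & _).
  split; intros x y z;
    destruct (Hs x) as [x' <-], (Hs y) as [y' <-], (Hs z) as [z' <-].
  - rewrite <- !h_transmission_sadd, saddA; reflexivity.
  - rewrite <- h_transmission_sadd, <- !amul, <- h_transmission_sadd, sadd_mulDl.
    reflexivity.
Qed.

End HTransmission.

Lemma F_rel_ghost {U V : stmonoid} {g : U -> V} {x y : U} :
  ghost x -> ghost y -> F_rel g x y -> g x = g y.
Proof.
  unfold ghost; intros gx gy [-> | [(_ & _ & Hg) | (Hx & Hy)]]; auto.
  rewrite gx in Hx; rewrite gy in Hy; congruence.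
Qed.

Lemma E_rel_ghost_kernel_e {U V : stmonoid} {a : U -> V} {x : U} :
  transmission a -> ghost (a x) -> E_rel (ghost_kernel a) x (smul se x).
Proof.
  intros Ha gx; right; unfold ghost_kernel.
  rewrite (transmission_e Ha); split; [|split]; auto using ghost_e.
  symmetry; apply ghost_e.
Qed.

Lemma h_transmission_quotient_E {U Ubar : stmonoid} {A : U -> Prop} {lam : U -> Ubar} :
  quotient_map (E_rel A) lam -> h_transmission lam.
Proof.
  intros (Ltr & _ & Lq); apply h_transmission_of_ghost_inj; auto.
  intros x y gx gy Heq; apply Lq in Heq as [-> | (_ & _ & Heq)]; congruence.
Qed.

Lemma h_transmission_quotient_tangible {W Wbar : stmonoid} {T : W -> W -> Prop}
  {mu : W -> Wbar} :
  tangible_MFCE T -> quotient_map T mu -> h_transmission mu.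
Proof.
  intros [_ Ttang] (Mtr & _ & Mq); apply h_transmission_of_ghost_inj; auto.
  intros x y gx _ Heq; symmetry; apply (Ttang x y gx), Mq, Heq.
Qed.

Lemma h_transmission_st_iso {U V : stmonoid} {r : U -> V} :
  st_iso r -> h_transmission r.
Proof.
  intros [Rtr (s & _ & sr & _)]; apply h_transmission_of_ghost_inj; auto.
  intros x y _ _ Heq; rewrite <- (sr x), <- (sr y), Heq; reflexivity.
Qed.

Lemma h_transmission_quotient_F {U V Ubar W : stmonoid} {alpha : U -> V}
  {lam : U -> Ubar} {gbar : Ubar -> V} {beta : Ubar -> W} :
  h_transmission alpha -> quotient_map (E_rel (ghost_kernel alpha)) lam ->
  (forall m : U, ghost m -> gbar (lam m) = alpha m) ->
  quotient_map (F_rel gbar) beta -> h_transmission beta.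
Proof.
  intros [Atr Ah] (Ltr & Ls & Lq) Hg (Btr & _ & Bq); split; [exact Btr|].
  intros x y Hlt Heq; destruct (Ls x) as [u <-], (Ls y) as [v <-].
  rewrite <- !(transmission_e Ltr) in Hlt, Heq.
  assert (Hlt_u : slt (smul se u) (smul se v) = true).
  { apply (transmission_slt_reflect Ltr); auto using ghost_e. }
  assert (Aeq : alpha (smul se u) = alpha (smul se v)).
  { rewrite <- !Hg by apply ghost_e.
    apply F_rel_ghost, Bq, Heq; apply (transmission_ghost Ltr), ghost_e. }
  assert (Lv : lam v = lam (smul se v)).
  { apply Lq, (E_rel_ghost_kernel_e Atr), (Ah u v Hlt_u Aeq). }
  rewrite Lv; apply (transmission_ghost Btr), (transmission_ghost Ltr), ghost_e.
Qed.

Theorem theorem5p11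
  (U V Ubar W Wbar : stmonoid) (alpha : U -> V)
  (lam : U -> Ubar) (beta : Ubar -> W) (mu : W -> Wbar) (rho : Wbar -> V)
  (gbar : Ubar -> V) (T : W -> W -> Prop) :
  h_transmission alpha -> surjective alpha ->
  quotient_map (E_rel (ghost_kernel alpha)) lam ->
  (* gbar is gamma = alpha^nu transported to the ghost ideal of Ubar (= M) *)
  (forall m : U, ghost m -> gbar (lam m) = alpha m) ->
  quotient_map (F_rel gbar) beta ->
  tangible_MFCE T -> quotient_map T mu ->
  st_iso rho ->
  (forall x : U, alpha x = rho (mu (beta (lam x)))) ->
  (h_transmission lam /\ h_transmission beta /\ h_transmission mu /\
   h_transmission rho) /\
  (is_semiring U ->
     (is_semiring Ubar /\ is_semiring W /\ is_semiring Wbar /\ is_semiring V) /\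
     (semiring_hom lam /\ semiring_hom beta /\ semiring_hom mu /\
      semiring_hom rho)).
Proof.
  intros Ha _ Hlam Hg Hbeta HT Hmu Hrho _.
  pose proof (h_transmission_quotient_E Hlam) as hL.
  pose proof (h_transmission_quotient_F Ha Hlam Hg Hbeta) as hB.
  pose proof (h_transmission_quotient_tangible HT Hmu) as hM.
  pose proof (h_transmission_st_iso Hrho) as hR.
  split; [exact (conj hL (conj hB (conj hM hR)))|]; intros HU.
  destruct Hlam as (_ & Ls & _), Hbeta as (_ & Bs & _), Hmu as (_ & Ms & _).
  destruct Hrho as (_ & s & _ & _ & rs).
  assert (Rs : surjective rho) by (intros v; exists (s v); apply rs).
  pose proof (semiring_of_h_transmission hL Ls HU) as SUbar.
  pose proof (semiring_of_h_transmission hB Bs SUbar) as SW.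
  pose proof (semiring_of_h_transmission hM Ms SW) as SWbar.
  pose proof (semiring_of_h_transmission hR Rs SWbar) as SV.
  split; [exact (conj SUbar (conj SW (conj SWbar SV)))|].
  exact (conj (semiring_hom_of_h_transmission hL)
          (conj (semiring_hom_of_h_transmission hB)
            (conj (semiring_hom_of_h_transmission hM)
              (semiring_hom_of_h_transmission hR)))).
Qed.
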